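(* Let $S=\{(X_m,y_m)\}_{m=1}^T\in\mathcal{S}_T$ with $\operatorname{rank}(X_m)=d-1$ for all $m$, and let $v_m$ be a unit vector spanning $\ker X_m$. Let $\tau$ be any ordering and $k\ge2$. For $i,j\in\{1,\dots,k\}$ let $\theta_{i,j}\in[0,\pi/2]$ satisfy $\cos^2\theta_{i,j}=(v_{\tau(i)}^\top v_{\tau(j)})^2$. Then $$F_{\tau,S}(k)\ge\min_{m}\sigma_{\min}^2(X_m)\,(v_{\tau(1)}^\top w^\star)^2\,\frac1k\Big(\prod_{i=1}^{k-1}\cos^2\theta_{i,i+1}\Big)\sum_{j=1}^{k-1}\big(1-\cos^2\theta_{j,k}\big),$$ where $\sigma_{\min}(X_m)$ is the smallest non-zero singular value of $X_m$.
   Context: Let $d\ge 1$, $T\ge1$. A task is a pair $(X_m,y_m)$ with $X_m\in\mathbb{R}^{n_m\times d}$, $y_m\in\mathbb{R}^{n_m}$ and $\operatorname{rank}(X_m)<d$. $\mathcal{S}_T$ denotes the set of collections $S=\{(X_m,y_m)\}_{m=1}^T$ of $T$ tasks such that $\|X_m\|\le 1$ (spectral norm) for all $m$ and there exists $w\in\mathbb{R}^d$ with $\|w\|\le 1$ and $y_m=X_mw$ for all $m$. Given $S$ and an ordering $\tau:\mathbb{N}^+\to\{1,\dots,T\}$, the iterates are $w_0=0$ and $w_t=w_{t-1}+X_{\tau(t)}^+(y_{\tau(t)}-X_{\tau(t)}w_{t-1})$, with $A^+$ the Moore–Penrose pseudoinverse. The forgetting at iteration $k$ is $F_{\tau,S}(k)=\frac1k\sum_{t=1}^k\|X_{\tau(t)}w_k-y_{\tau(t)}\|^2$.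 $w^\star$ denotes the minimum Euclidean-norm vector with $X_mw^\star=y_m$ for all $m$. *)

From HB Require Import structures.
From mathcomp Require Import all_boot all_order all_algebra.
From mathcomp Require Import all_classical all_reals.
Set Implicit Arguments. Unset Strict Implicit. Unset Printing Implicit Defensive.
Import Order.TTheory GRing.Theory Num.Theory.
Local Open Scope ring_scope.
Local Open Scope classical_set_scope.

Section Defs.
Variable R : realType.

Definition dotv (d : nat) (u v : 'cV[R]_d) : R := \sum_(i < d) u i 0 * v i 0.
Definition nrm2 (d : nat) (u : 'cV[R]_d) : R := dotv u u.

Definition spec_le1 (n d : nat) (A : 'M[R]_(n, d)) : Prop :=
  forall u : 'cV[R]_d, nrm2 (A *m u) <= nrm2 u.

(* P is the Moore-Penrose pseudoinverse of A (the four Penrose equations;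
   such a P exists and is unique) *)
Definition is_pinv (n d : nat) (A : 'M[R]_(n, d)) (P : 'M[R]_(d, n)) : Prop :=
  [/\ A *m P *m A = A, P *m A *m P = P,
      (A *m P)^T = A *m P & (P *m A)^T = P *m A].

(* Smallest non-zero singular value of A: infimum of the positive s such that
   s^2 is an eigenvalue of A^T A *)
Definition sigma_min (n d : nat) (A : 'M[R]_(n, d)) : R :=
  inf [set s : R | 0 < s /\ eigenvalue (A^T *m A) (s ^+ 2)].

Fixpoint iterate (T d : nat) (n : 'I_T -> nat)
    (X : forall m, 'M[R]_(n m, d)) (y : forall m, 'cV[R]_(n m))
    (Xp : forall m, 'M[R]_(d, n m)) (tau : nat -> 'I_T) (t : nat) : 'cV[R]_d :=
  match t with
  | 0 => 0
  | t'.+1 =>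
      let w := iterate X y Xp tau t' in
      w + Xp (tau t) *m (y (tau t) - X (tau t) *m w)
  end.

Definition forgetting (T d : nat) (n : 'I_T -> nat)
    (X : forall m, 'M[R]_(n m, d)) (y : forall m, 'cV[R]_(n m))
    (Xp : forall m, 'M[R]_(d, n m)) (tau : nat -> 'I_T) (k : nat) : R :=
  k%:R^-1 * \sum_(1 <= t < k.+1)
      nrm2 (X (tau t) *m iterate X y Xp tau k - y (tau t)).

Definition in_ST (T d : nat) (n : 'I_T -> nat)
    (X : forall m, 'M[R]_(n m, d)) (y : forall m, 'cV[R]_(n m)) : Prop :=
  (forall m, (\rank (X m) < d)%N) /\ (forall m, spec_le1 (X m)) /\
  exists w : 'cV[R]_d, nrm2 w <= 1 /\ forall m, y m = X m *m w.

Definition is_min_norm_sol (T d : nat) (n : 'I_T -> nat)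
    (X : forall m, 'M[R]_(n m, d)) (y : forall m, 'cV[R]_(n m)) (w : 'cV[R]_d) : Prop :=
  (forall m, X m *m w = y m) /\
  forall w' : 'cV[R]_d, (forall m, X m *m w' = y m) -> nrm2 w <= nrm2 w'.

End Defs.

From HB Require Import structures.
From mathcomp Require Import all_boot all_order all_algebra.
From mathcomp Require Import all_classical all_reals all_analysis.
From mathcomp Require Import ring lra.
Import Order.TTheory GRing.Theory Num.Theory numFieldNormedType.Exports.
Set Implicit Arguments. Unset Printing Implicit Defensive.
Local Open Scope ring_scope.
Local Open Scope classical_set_scope.

(* When ker X_m is the line spanned by the unit vector v_m, the
   pseudoinverse step is the orthogonal projection u |-> u - <v_m,u> v_m onto
   v_m^perp (pinv_proj).  Since w* solves every task, the error
   e_t = w_t - w* obeys e_t = <v_{tau t}, e_{t-1}> v_{tau t}, so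
   e_k = c v_{tau k} with c^2 = <v_{tau 1}, w*>^2 prod_i <v_{tau i},v_{tau(i+1)}>^2
   (error_closed_form).  The residual of task tau j at time k is then
   c^2 ||X_{tau j} v_{tau k}||^2, and the component of v_{tau k} orthogonal to
   v_{tau j} has squared norm 1 - <v_{tau j},v_{tau k}>^2; a Rayleigh-quotient
   bound (rayleigh), obtained by minimising ||X u||^2 over the compact unit
   sphere of v^perp and reading off the first-order condition as an
   eigen-equation for X^T X, controls it from below by sigma_min^2.  Summing
   over j < k yields the theorem. *)

Section InnerProduct.
Context {R : realType}.
Implicit Types (d : nat).

Lemma dotvE d (u w : 'cV[R]_d) : dotv u w = (u^T *m w) 0 0.
Proof. by rewrite /dotv !mxE; apply: eq_bigr => i _; rewrite !mxE. Qed.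

Lemma dotvC d (u w : 'cV[R]_d) : dotv u w = dotv w u.
Proof. by rewrite /dotv; apply: eq_bigr => i _; rewrite mulrC. Qed.

Lemma dotvDl d (u u' w : 'cV[R]_d) : dotv (u + u') w = dotv u w + dotv u' w.
Proof. by rewrite /dotv -big_split; apply: eq_bigr => i _; rewrite !mxE mulrDl. Qed.

Lemma dotvZl d a (u w : 'cV[R]_d) : dotv (a *: u) w = a * dotv u w.
Proof. by rewrite /dotv mulr_sumr; apply: eq_bigr => i _; rewrite !mxE mulrA. Qed.

Lemma dotvNl d (u w : 'cV[R]_d) : dotv (- u) w = - dotv u w.
Proof. by rewrite -scaleN1r dotvZl mulN1r. Qed.

Lemma dotvBl d (u u' w : 'cV[R]_d) : dotv (u - u') w = dotv u w - dotv u' w.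
Proof. by rewrite dotvDl dotvNl. Qed.

Lemma dotvDr d (u u' w : 'cV[R]_d) : dotv w (u + u') = dotv w u + dotv w u'.
Proof. by rewrite !(dotvC w) dotvDl. Qed.

Lemma dotvZr d a (u w : 'cV[R]_d) : dotv w (a *: u) = a * dotv w u.
Proof. by rewrite !(dotvC w) dotvZl. Qed.

Lemma dotvBr d (u u' w : 'cV[R]_d) : dotv w (u - u') = dotv w u - dotv w u'.
Proof. by rewrite !(dotvC w) dotvBl. Qed.

Lemma dotv0l d (w : 'cV[R]_d) : dotv 0 w = 0.
Proof. by rewrite /dotv big1 // => i _; rewrite mxE mul0r. Qed.

Lemma dotv0r d (w : 'cV[R]_d) : dotv w 0 = 0.
Proof. by rewrite dotvC dotv0l. Qed.

Lemma dotv_tr n d (A : 'M[R]_(n, d)) (u : 'cV[R]_n) (w : 'cV[R]_d) :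
  dotv (A^T *m u) w = dotv u (A *m w).
Proof. by rewrite !dotvE trmx_mul trmxK mulmxA. Qed.

Lemma nrm2_ge0 d (u : 'cV[R]_d) : 0 <= nrm2 u.
Proof. by rewrite /nrm2 /dotv sumr_ge0 // => i _; rewrite -expr2 sqr_ge0. Qed.

Lemma nrm2_eq0 d (u : 'cV[R]_d) : nrm2 u = 0 -> u = 0.
Proof.
move=> /eqP; rewrite /nrm2 /dotv psumr_eq0; last by move=> i _; rewrite -expr2 sqr_ge0.
move=> /allP H; apply/matrixP => i j; rewrite (ord1 j) mxE.
by have := H i (mem_index_enum _); rewrite -expr2 sqrf_eq0 => /eqP.
Qed.

Lemma nrm2_gt0 d (u : 'cV[R]_d) : u != 0 -> 0 < nrm2 u.
Proof.
move=> u0; rewrite lt_neqAle nrm2_ge0 andbT eq_sym.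
by apply: contra u0 => /eqP /nrm2_eq0 ->.
Qed.

Lemma nrm2Z d a (u : 'cV[R]_d) : nrm2 (a *: u) = a ^+ 2 * nrm2 u.
Proof. by rewrite /nrm2 dotvZl dotvZr mulrA expr2. Qed.

Lemma nrm2D d (u w : 'cV[R]_d) :
  nrm2 (u + w) = nrm2 u + 2 * dotv u w + nrm2 w.
Proof. rewrite /nrm2 dotvDl !dotvDr (dotvC w u); ring. Qed.

Lemma coord_sq_le d (u : 'cV[R]_d) i : u i 0 ^+ 2 <= nrm2 u.
Proof.
rewrite /nrm2 /dotv (bigD1 i) //= -expr2 lerDl sumr_ge0 // => j _.
by rewrite -expr2 sqr_ge0.
Qed.

Lemma nrm2_orth_part d (u v : 'cV[R]_d) : nrm2 v = 1 ->
  nrm2 (u - dotv v u *: v) = nrm2 u - dotv v u ^+ 2.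
Proof.
move=> nv; rewrite -scaleNr nrm2D nrm2Z dotvZr nv dotvC; ring.
Qed.

End InnerProduct.

(* Topology on row vectors, used to minimise a quadratic form on a compact set. *)
Section Compactness.
Context {R : realType}.
Implicit Types (d : nat).

Lemma sum_continuous d p (F : 'I_p -> 'rV[R]_d -> R) :
  (forall j, continuous (F j)) -> continuous (fun r => \sum_j F j r).
Proof.
elim: p F => [|p IH] F HF.
  have -> : (fun r => \sum_(j < 0) F j r) = (fun=> 0).
    by apply: funext => r; rewrite big_ord0.
  exact: cst_continuous.
have -> : (fun r => \sum_(j < p.+1) F j r) =
   (fun r => \sum_(j < p) F (widen_ord (leqnSn p) j) r + F ord_max r).
  by apply: funext => r; rewrite big_ord_recr.
move=> x; apply: continuousD; last exact: HF.
by apply: (IH (fun j => F (widen_ord (leqnSn p) j))) => j; exact: HF.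
Qed.

Lemma linear_form_continuous d (a : 'I_d -> R) :
  continuous (fun r : 'rV[R]_d => \sum_j a j * r 0 j).
Proof.
apply: sum_continuous => j x; apply: continuousM; first exact: cst_continuous.
exact: coord_continuous.
Qed.

Lemma quad_continuous n d (X : 'M[R]_(n, d)) :
  continuous (fun r : 'rV[R]_d => nrm2 (X *m r^T)).
Proof.
have -> : (fun r : 'rV[R]_d => nrm2 (X *m r^T)) =
  (fun r => \sum_i ((\sum_j X i j * r 0 j) * (\sum_j X i j * r 0 j))).
  apply: funext => r; rewrite /nrm2 /dotv; apply: eq_bigr => i _.
  by rewrite !mxE; congr (_ * _); apply: eq_bigr => j _; rewrite !mxE.
by apply: sum_continuous => i x; apply: continuousM; exact: linear_form_continuous.
Qed.

Lemma dot_continuous d (v : 'cV[R]_d) : continuous (fun r : 'rV[R]_d => dotv v r^T).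
Proof.
have -> : (fun r : 'rV[R]_d => dotv v r^T) = (fun r => \sum_j v j 0 * r 0 j).
  by apply: funext => r; rewrite /dotv; apply: eq_bigr => j _; rewrite !mxE.
exact: linear_form_continuous.
Qed.

Definition orth_sphere d (v : 'cV[R]_d) : set 'rV[R]_d :=
  [set r | nrm2 r^T = 1 /\ dotv v r^T = 0].

Lemma orth_sphere_compact d (v : 'cV[R]_d) : compact (orth_sphere v).
Proof.
have -> : orth_sphere v = (fun r : 'rV[R]_d => nrm2 (1%:M *m r^T)) @^-1` [set 1]
    `&` (fun r => dotv v r^T) @^-1` [set 0].
  by apply/seteqP; split => r; rewrite /= mul1mx.
apply: compact_closedI; last first.
  by apply: preimage_closed; [move=> x _; exact: dot_continuous | exact: closed_eq].
apply: bounded_closed_compact; last first.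
  by apply: preimage_closed; [move=> x _; exact: quad_continuous | exact: closed_eq].
rewrite /= /bounded_near; near=> M => r /=; rewrite mul1mx => Hr.
rewrite [X in X <= _]/Num.norm /= mx_normrE; apply/bigmax_leP; split.
  by near: M; apply: nbhs_pinfty_ge; rewrite num_real.
move=> [i j] _ /=; apply: (@le_trans _ _ 1); last first.
  by near: M; apply: nbhs_pinfty_ge; rewrite num_real.
have := coord_sq_le (r^T) j; rewrite Hr mxE (ord1 i) => H.
by rewrite -(ler_pXn2r (n:=2)) ?nnegrE ?normr_ge0 // expr1n real_normK ?num_real.
Unshelve. all: by end_near.
Qed.

End Compactness.

Section Rayleigh.
Context {R : realType}.
Variables (n d : nat) (X : 'M[R]_(n, d)) (v : 'cV[R]_d).

Lemma sigma_min_ge0 : 0 <= sigma_min X.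
Proof.
rewrite /sigma_min; set S := [set s | _].
have [ne|ne] := pselect (S !=set0); first by apply: lb_le_inf => // s [/ltW].
suff -> : S = set0 by rewrite inf0.
by apply/seteqP; split=> s // Hs; exfalso; apply: ne; exists s.
Qed.

Lemma sigma_min_le s :
  0 < s -> eigenvalue (X^T *m X) (s ^+ 2) -> sigma_min X <= s.
Proof.
move=> s0 es; apply: (@ge_inf R _ _ s (conj s0 es)).
by exists 0 => x [/ltW].
Qed.

(* Minimiser of ||X u||^2 on the unit sphere of v^perp; by homogeneity its
   value lam gives lam ||w||^2 <= ||X w||^2 on all of v^perp. *)
Lemma orth_min_exists (u : 'cV[R]_d) : u != 0 -> dotv v u = 0 ->
  exists c : 'cV[R]_d, [/\ nrm2 c = 1, dotv v c = 0 &
    forall w, dotv v w = 0 -> nrm2 (X *m c) * nrm2 w <= nrm2 (X *m w)].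
Proof.
move=> u0 vu.
have unit_of (w : 'cV[R]_d) : w != 0 -> nrm2 ((Num.sqrt (nrm2 w))^-1 *: w) = 1.
  move=> w0; rewrite nrm2Z exprVn sqr_sqrtr ?nrm2_ge0 //.
  by rewrite mulVf // gt_eqF // nrm2_gt0.
have Kne : orth_sphere v !=set0.
  exists ((Num.sqrt (nrm2 u))^-1 *: u)^T; rewrite /orth_sphere /= trmxK.
  by rewrite unit_of // dotvZr vu mulr0.
have [c0 /[!inE] -[nc vc] minc] := EVT_min_rV Kne (orth_sphere_compact v)
   (continuous_subspaceT (quad_continuous (X := X))).
exists c0^T; split => // w vw.
have [->|w0] := eqVneq w 0; first by rewrite /nrm2 dotv0l mulr0 mulmx0 dotv0l.
have s0 : 0 < Num.sqrt (nrm2 w) by rewrite sqrtr_gt0 nrm2_gt0.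
have := minc ((Num.sqrt (nrm2 w))^-1 *: w)^T.
rewrite inE /orth_sphere /= trmxK unit_of // dotvZr vw mulr0 -scalemxAr nrm2Z.
rewrite exprVn sqr_sqrtr ?nrm2_ge0 // => /(_ (conj erefl erefl)) min_ratio.
by rewrite -ler_pdivlMr ?nrm2_gt0 // mulrC.
Qed.

Lemma orth_min_stationary (c : 'cV[R]_d) : nrm2 c = 1 -> dotv v c = 0 ->
  (forall w, dotv v w = 0 -> nrm2 (X *m c) * nrm2 w <= nrm2 (X *m w)) ->
  forall h, dotv v h = 0 ->
    dotv (X *m c) (X *m h) = nrm2 (X *m c) * dotv c h.
Proof.
move=> nc vc minc h vh; apply/eqP; rewrite -subr_eq0; apply/eqP.
set lam := nrm2 (X *m c); set b := _ - _.
set q := nrm2 (X *m h) - lam * nrm2 h.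
have q0 : 0 <= q by rewrite subr_ge0 minc.
set t := - b / (q + 1).
have tb : b = - (t * (q + 1)) by rewrite /t divfK ?opprK // gt_eqF //; lra.
have := minc (c + t *: h).
rewrite dotvDr dotvZr vh vc mulr0 addr0 => /(_ erefl).
rewrite mulmxDr -scalemxAr !nrm2D !nrm2Z !dotvZr nc -/lam -subr_ge0 => perturbed.
have gain : 0 <= t * (2 * b + t * q).
  apply: le_trans perturbed _; rewrite /b /q le_eqVlt.
  by apply/orP; left; apply/eqP; ring.
rewrite tb in gain; have t0 : t = 0 by nra.
by rewrite tb t0 mul0r oppr0.
Qed.

Hypothesis nv : nrm2 v = 1.
Hypothesis Xv : X *m v = 0.
Hypothesis kerX : forall u, X *m u = 0 -> exists c : R, u = c *: v.

(* Since v lies in ker X, the stationarity condition on v^perp extends to all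
   of R^d: the minimiser c is an eigenvector of X^T X for lam. *)
Lemma orth_min_eigen (c : 'cV[R]_d) :
  (forall h, dotv v h = 0 -> dotv (X *m c) (X *m h) = nrm2 (X *m c) * dotv c h) ->
  dotv v c = 0 -> X^T *m (X *m c) = nrm2 (X *m c) *: c.
Proof.
move=> stat vc; apply/eqP; rewrite -subr_eq0; apply/eqP.
set z := _ - _.
have zh h : dotv v h = 0 -> dotv z h = 0.
  by move=> vh; rewrite dotvBl dotv_tr dotvZl stat // subrr.
have zv : dotv z v = 0.
  by rewrite dotvBl dotv_tr Xv dotv0r dotvZl dotvC vc mulr0 subr0.
apply: nrm2_eq0; have := zh (z - dotv v z *: v).
rewrite dotvBr dotvZr -/(nrm2 v) nv mulr1 subrr => /(_ erefl).
by rewrite dotvBr dotvZr dotvC zv mulr0 subr0.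
Qed.

Lemma rayleigh (u : 'cV[R]_d) : dotv v u = 0 ->
  sigma_min X ^+ 2 * nrm2 u <= nrm2 (X *m u).
Proof.
move=> vu; have [->|u0] := eqVneq u 0.
  by rewrite /nrm2 dotv0l mulr0 mulmx0 dotv0l.
have [c [nc vc minc]] := orth_min_exists u0 vu.
set lam := nrm2 (X *m c) in minc.
have eig := orth_min_eigen (orth_min_stationary nc vc minc) vc.
have lam_gt0 : 0 < lam.
  apply: nrm2_gt0; apply/eqP => /kerX [a ca].
  move: vc nc; rewrite ca dotvZr -/(nrm2 v) nv mulr1 => ->.
  by rewrite scale0r /nrm2 dotv0l => /eqP; rewrite eq_sym oner_eq0.
have sqrt_eig : eigenvalue (X^T *m X) (Num.sqrt lam ^+ 2).
  rewrite sqr_sqrtr ?ltW //; apply/eigenvalueP; exists c^T.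
    by have := congr1 trmx eig; rewrite !trmx_mul trmxK linearZ /= mulmxA.
  by apply: contra_neq (oner_neq0 R) => c0; rewrite -nc -[c]trmxK c0 trmx0 /nrm2 dotv0l.
have sl : sigma_min X <= Num.sqrt lam by apply: sigma_min_le; rewrite ?sqrtr_gt0.
have sg := sigma_min_ge0; have sq := sqr_sqrtr (ltW lam_gt0).
apply: le_trans (minc u vu); rewrite ler_wpM2r ?nrm2_ge0 //; nra.
Qed.

End Rayleigh.

Lemma pinv_proj (R : realType) n d (X : 'M[R]_(n, d)) Xp (v : 'cV[R]_d) :
  is_pinv X Xp -> nrm2 v = 1 -> X *m v = 0 ->
  (forall u, X *m u = 0 -> exists c : R, u = c *: v) ->
  forall u, Xp *m (X *m u) = u - dotv v u *: v.
Proof.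
move=> [XpX _ _ symPX] nv Xv kerX u.
have ker_res : X *m (u - Xp *m X *m u) = 0 by rewrite mulmxBr !mulmxA XpX subrr.
have [a ha] := kerX _ ker_res.
have pv : dotv v (Xp *m X *m u) = 0.
  by rewrite -symPX -dotv_tr trmxK -mulmxA Xv mulmx0 dotv0l.
have av : a = dotv v u.
  by have := congr1 (dotv v) ha; rewrite dotvZr -/(nrm2 v) nv mulr1 dotvBr pv subr0 => <-.
by rewrite mulmxA -av -ha opprB addrC subrK.
Qed.

Section Iterates.
Context {R : realType}.
Context {d T : nat} {n : 'I_T -> nat}.
Context {X : forall m, 'M[R]_(n m, d)} {y : forall m, 'cV[R]_(n m)}.
Context {Xp : forall m, 'M[R]_(d, n m)} {v : 'I_T -> 'cV[R]_d} {wstar : 'cV[R]_d}.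
Variable tau : nat -> 'I_T.
Hypothesis hv : forall m, nrm2 (v m) = 1 /\ X m *m v m = 0 /\
  forall u : 'cV[R]_d, X m *m u = 0 -> exists c : R, u = c *: v m.
Hypothesis hp : forall m, is_pinv (X m) (Xp m).
Hypothesis hw : forall m, X m *m wstar = y m.

Local Notation w := (iterate X y Xp tau).

Lemma error_step t :
  w t.+1 - wstar = dotv (v (tau t.+1)) (w t - wstar) *: v (tau t.+1).
Proof.
have [nv [Xv kerX]] := hv (tau t.+1).
rewrite /= -hw -mulmxBr (pinv_proj (hp _) nv Xv kerX) !dotvBr.
by apply/matrixP => i j; rewrite !mxE; ring.
Qed.

Lemma error_closed_form k : (1 <= k)%N -> exists c : R,
  w k - wstar = c *: v (tau k) /\
  c ^+ 2 = dotv (v (tau 1%N)) wstar ^+ 2 *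
           \prod_(1 <= i < k) dotv (v (tau i)) (v (tau i.+1)) ^+ 2.
Proof.
elim: k => [//|[|k] IH] _.
  exists (- dotv (v (tau 1%N)) wstar); split.
    by rewrite error_step /= sub0r dotvC dotvNl dotvC.
  by rewrite big_geq // mulr1 sqrrN.
have [c [ec c2]] := IH erefl.
exists (dotv (v (tau k.+2)) (v (tau k.+1)) * c); split.
  by rewrite error_step ec dotvZr mulrC.
rewrite exprMn c2 (@big_nat_recr _ _ _ k.+1 1%N) //= mulrA [in RHS]mulrC.
by rewrite dotvC mulrA.
Qed.

(* Residual of task tau t on the unit vector v_{tau k}, bounded through the
   component of v_{tau k} orthogonal to v_{tau t}. *)
Lemma residual_lower_bound t k :
  sigma_min (X (tau t)) ^+ 2 * (1 - dotv (v (tau t)) (v (tau k)) ^+ 2)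
  <= nrm2 (X (tau t) *m v (tau k)).
Proof.
have [nv [Xv kerX]] := hv (tau t); have [nk _] := hv (tau k).
set a := dotv (v (tau t)) (v (tau k)).
have := rayleigh nv Xv kerX (u := v (tau k) - a *: v (tau t)).
rewrite dotvBr dotvZr -/(nrm2 _) nv mulr1 subrr nrm2_orth_part // nk => /(_ erefl).
by rewrite mulmxBr -scalemxAr Xv scaler0 subr0.
Qed.

End Iterates.

Lemma unit_dot_sq_le1 {R : realType} d (u v : 'cV[R]_d) :
  nrm2 u = 1 -> nrm2 v = 1 -> 0 <= 1 - dotv v u ^+ 2.
Proof. by move=> nu nv; rewrite -nu -nrm2_orth_part // nrm2_ge0. Qed.

Lemma inf_image_le (R : realType) (I : Type) (f : I -> R) (i : I) :
  (forall j, 0 <= f j) -> inf [set f j | j in [set: I]] <= f i.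
Proof. by move=> f0; apply: ge_inf; [exists 0 => _ [j _ <-] | exists i]. Qed.

Theorem mainTheorem10 (R : realType) (d T : nat) (n : 'I_T -> nat)
    (X : forall m, 'M[R]_(n m, d)) (y : forall m, 'cV[R]_(n m))
    (Xp : forall m, 'M[R]_(d, n m)) (v : 'I_T -> 'cV[R]_d)
    (wstar : 'cV[R]_d) (tau : nat -> 'I_T) (k : nat) :
  (1 <= d)%N -> (1 <= T)%N ->
  in_ST X y ->
  (forall m, \rank (X m) = d.-1) ->
  (forall m, nrm2 (v m) = 1 /\ X m *m v m = 0 /\
     forall u : 'cV[R]_d, X m *m u = 0 -> exists c : R, u = c *: v m) ->
  (forall m, is_pinv (X m) (Xp m)) ->
  is_min_norm_sol X y wstar ->
  (2 <= k)%N ->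
  inf [set sigma_min (X m) ^+ 2 | m in [set: 'I_T]]
    * (dotv (v (tau 1%N)) wstar) ^+ 2 * k%:R^-1
    * (\prod_(1 <= i < k) (dotv (v (tau i)) (v (tau i.+1))) ^+ 2)
    * (\sum_(1 <= j < k) (1 - (dotv (v (tau j)) (v (tau k))) ^+ 2))
  <= forgetting X y Xp tau k.
Proof.
move=> _ _ _ _ hv hp [hw _] k2.
have [c [ec c2]] := error_closed_form tau hv hp hw k (ltnW k2).
set I := inf _; set S := \sum_(1 <= j < k) _.
have residual t : nrm2 (X (tau t) *m iterate X y Xp tau k - y (tau t))
    = c ^+ 2 * nrm2 (X (tau t) *m v (tau k)).
  by rewrite -hw -mulmxBr ec -scalemxAr nrm2Z.
have -> : I * dotv (v (tau 1%N)) wstar ^+ 2 * k%:R^-1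
    * \prod_(1 <= i < k) dotv (v (tau i)) (v (tau i.+1)) ^+ 2 * S
    = k%:R^-1 * (c ^+ 2 * (I * S)) by rewrite c2; ring.
rewrite /forgetting ler_wpM2l ?invr_ge0 ?ler0n // big_nat_recr ?(ltnW k2) //=.
rewrite -[X in X <= _]addr0; apply: lerD; last exact: nrm2_ge0.
rewrite /S !mulr_sumr; apply: ler_sum => j _.
rewrite residual ler_wpM2l ?sqr_ge0 //.
apply: le_trans (residual_lower_bound tau hv j k).
rewrite ler_wpM2r ?inf_image_le // => [|m]; last exact: sqr_ge0.
by apply: unit_dot_sq_le1; [case: (hv (tau k)) | case: (hv (tau j))].
Qed.
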